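(* For every rational $m$ with $0<m<1$ there are infinitely many pairwise non-congruent hyperbolic Heron triangles having a right angle and whose area $A$ satisfies $\cos A=\frac{1-m^2}{1+m^2}$, $\sin A=\frac{2m}{1+m^2}$.
   Context: All triangles are non-degenerate, bounded triangles in the hyperbolic plane (curvature $-1$), with side lengths $a,b,c>0$, opposite angles $\alpha,\beta,\gamma>0$, and area $A=\pi-\alpha-\beta-\gamma$. A hyperbolic Heron triangle is one with $e^a,e^b,e^c\in\mathbb{Q}$ and $e^{i\alpha},e^{i\beta},e^{i\gamma},e^{iA}\in\mathbb{Q}[i]$. *)

From Stdlib Require Import Reals QArith Qreals Lra.
Open Scope R_scope.

Definition is_rat (x : R) : Prop := exists q : Q, Q2R q = x.

(* A complex number x + i y lies in Q[i]. *)
Definition in_Qi (x y : R) : Prop := is_rat x /\ is_rat y.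

(* Data of a triangle: side lengths a b c and opposite angles al be ga. *)
Record htri := mk_htri {
  ta : R; tb : R; tc : R;
  tal : R; tbe : R; tga : R }.

(* A non-degenerate bounded triangle in the hyperbolic plane of curvature -1:
   positive sides, angles in (0, pi), related by the hyperbolic law of
   cosines (which determines the triangle up to isometry; the strict
   triangle inequalities follow from |cos| < 1). *)
Definition is_hyp_triangle (t : htri) : Prop :=
  0 < ta t /\ 0 < tb t /\ 0 < tc t /\
  0 < tal t < PI /\ 0 < tbe t < PI /\ 0 < tga t < PI /\
  cosh (ta t) = cosh (tb t) * cosh (tc t) - sinh (tb t) * sinh (tc t) * cos (tal t) /\
  cosh (tb t) = cosh (tc t) * cosh (ta t) - sinh (tc t) * sinh (ta t) * cos (tbe t) /\
  cosh (tc t) = cosh (ta t) * cosh (tb t) - sinh (ta t) * sinh (tb t) * cos (tga t).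

Definition harea (t : htri) : R := PI - tal t - tbe t - tga t.

Definition is_hyp_heron (t : htri) : Prop :=
  is_hyp_triangle t /\
  is_rat (exp (ta t)) /\ is_rat (exp (tb t)) /\ is_rat (exp (tc t)) /\
  in_Qi (cos (tal t)) (sin (tal t)) /\
  in_Qi (cos (tbe t)) (sin (tbe t)) /\
  in_Qi (cos (tga t)) (sin (tga t)) /\
  in_Qi (cos (harea t)) (sin (harea t)).

Definition has_right_angle (t : htri) : Prop :=
  tal t = PI / 2 \/ tbe t = PI / 2 \/ tga t = PI / 2.

(* Congruence (SSS): same side lengths up to a permutation. *)
Definition hcongruent (t u : htri) : Prop :=
  let a := ta t in let b := tb t in let c := tc t in
  let a' := ta u in let b' := tb u in let c' := tc u in
  (a = a' /\ b = b' /\ c = c') \/ (a = a' /\ b = c' /\ c = b') \/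
  (a = b' /\ b = a' /\ c = c') \/ (a = b' /\ b = c' /\ c = a') \/
  (a = c' /\ b = a' /\ c = b') \/ (a = c' /\ b = b' /\ c = a').

(* Put the right angle at the third vertex and take alpha = 2 atan t, area A = 2 atan m, so
   beta = pi/2 - A - alpha.  These angles and the area have cosine and sine in Q, and the
   right-angle relations cosh a = cos alpha / sin beta, cosh b = cos beta / sin alpha,
   cosh c = cot alpha cot beta, sinh a = sin alpha sinh c, sinh b = sin beta sinh c make the
   triangle Heron as soon as sinh c is rational.  Since
   sinh^2 c = sin A sin (A + 2 alpha) / (sin alpha sin beta)^2, this happens exactly when
   W^2 = t^4 - 2k t^3 - 6t^2 + 2kt + 1, k = (1 - m^2)/m, has a rational solution.

   This quartic is birational to the elliptic curve y^2 = x^3 - M^2 x, M = 2(1 + m^2)/m, small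
   t corresponding to large x.  The point P0 = (-4, 4k) has infinite order: at each doubling
   starting from 2 P0 the 2-adic valuation of x/M drops by 2.  The rational points 2^j P0 have
   x >= M; either they are unbounded, or two of them are so close that the chord through them
   is steep and meets the curve again far out.  So there are rational points with arbitrarily
   large x, hence solutions with arbitrarily small t > 0, and a decreasing sequence of them gives
   triangles told apart by sinh a / sinh c = sin alpha. *)

From Stdlib Require Import Reals QArith Qreals Qcanon Lra Lia ZArith Nsatz.
From Stdlib Require Import Classical ClassicalEpsilon.
Open Scope R_scope.

(** * Rational numbers *)

Lemma is_rat_Q2R (q : Q) : is_rat (Q2R q).
Proof. now exists q. Qed.

Lemma is_rat_IZR (z : Z) : is_rat (IZR z).
Proof. exists (inject_Z z). unfold Q2R; simpl. field. Qed.

Lemma is_rat_plus x y : is_rat x -> is_rat y -> is_rat (x + y).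
Proof. intros [a <-] [b <-]. exists (a + b)%Q. apply Q2R_plus. Qed.

Lemma is_rat_mult x y : is_rat x -> is_rat y -> is_rat (x * y).
Proof. intros [a <-] [b <-]. exists (a * b)%Q. apply Q2R_mult. Qed.

Lemma is_rat_opp x : is_rat x -> is_rat (- x).
Proof. intros [a <-]. exists (- a)%Q. apply Q2R_opp. Qed.

Lemma is_rat_minus x y : is_rat x -> is_rat y -> is_rat (x - y).
Proof. intros [a <-] [b <-]. exists (a - b)%Q. apply Q2R_minus. Qed.

Lemma is_rat_inv x : is_rat x -> is_rat (/ x).
Proof.
  intros [a <-]. destruct (Qeq_dec a 0) as [Ha | Ha].
  - rewrite (Qeq_eqR _ _ Ha), RMicromega.Q2R_0, Rinv_0. apply is_rat_IZR.
  - exists (/ a)%Q. now apply Q2R_inv.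
Qed.

Lemma is_rat_div x y : is_rat x -> is_rat y -> is_rat (x / y).
Proof. intros Hx Hy. apply is_rat_mult; [exact Hx | now apply is_rat_inv]. Qed.

Lemma is_rat_pow x n : is_rat x -> is_rat (x ^ n).
Proof.
  intros Hx. induction n as [| n IH]; [apply is_rat_IZR | now apply is_rat_mult].
Qed.

Lemma is_rat_abs x : is_rat x -> is_rat (Rabs x).
Proof.
  intros Hx. destruct (Rle_or_lt 0 x).
  - now rewrite Rabs_pos_eq.
  - rewrite Rabs_left by lra. now apply is_rat_opp.
Qed.

Ltac solve_rat :=
  repeat first
    [ assumption | apply is_rat_IZR | apply is_rat_Q2R
    | apply is_rat_plus | apply is_rat_minus | apply is_rat_mult | apply is_rat_opp
    | apply is_rat_div | apply is_rat_inv | apply is_rat_pow | apply is_rat_abs ].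

Lemma is_rat_coprime_frac (x : R) : is_rat x ->
  exists p q : Z, Z.gcd p q = 1%Z /\ q <> 0%Z /\ x = IZR p / IZR q.
Proof.
  intros [r <-]. exists (Qnum (Qred r)), (QDen (Qred r)).
  split; [apply Qred_iff, Qred_involutive |]. split; [discriminate |].
  rewrite <- (Qeq_eqR _ _ (Qred_correct r)). reflexivity.
Qed.

Lemma pow2_pos (x : R) : x <> 0 -> 0 < x ^ 2.
Proof. intros Hx. rewrite <- Rsqr_pow2. now apply Rsqr_pos_lt. Qed.

Lemma IZR_sqr (z : Z) : IZR z ^ 2 = IZR (z * z).
Proof. rewrite mult_IZR. ring. Qed.

(** * Odd fractions over powers of 2 *)

Definition odd_over_pow2 (e : nat) (z : R) : Prop :=
  exists a b : Z, Z.odd a = true /\ Z.odd b = true /\ z = IZR a / (IZR b * 2 ^ e).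

Lemma IZR_odd_neq0 (a : Z) : Z.odd a = true -> IZR a <> 0.
Proof. intros Ha. apply not_0_IZR. now intros ->. Qed.

Lemma Z_odd_pow2 (n : nat) : (1 <= n)%nat -> Z.odd (2 ^ Z.of_nat n) = false.
Proof.
  intros Hn. destruct n as [| n]; [lia |].
  now rewrite Nat2Z.inj_succ, Z.pow_succ_r, Z.odd_mul by lia.
Qed.

Lemma Z_odd_square (p : Z) : Z.odd p = true -> exists A, (p * p = 8 * A + 1)%Z.
Proof.
  intros Hp. apply Z.odd_spec in Hp as [a ->].
  destruct (Z.Even_or_Odd a) as [[b ->] | [b ->]].
  - exists (2 * b * b + b)%Z. ring.
  - exists (2 * b * b + 3 * b + 1)%Z. ring.
Qed.

Lemma Z_odd_part (z : Z) : z <> 0%Z ->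
  exists (f : nat) (w : Z), Z.odd w = true /\ z = (2 ^ Z.of_nat f * w)%Z.
Proof.
  enough (H : forall (n : nat) (z : Z), (Z.abs z <= Z.of_nat n)%Z -> z <> 0%Z ->
            exists (f : nat) (w : Z), Z.odd w = true /\ z = (2 ^ Z.of_nat f * w)%Z)
    by (apply (H (Z.abs_nat z)); lia).
  clear z. intros n. induction n as [| n IH]; intros z Hn Hz; [lia |].
  destruct (Z.Even_or_Odd z) as [[b ->] | Hodd].
  - destruct (IH b) as [f [w [Hw ->]]]; [lia .. |].
    exists (S f), w. split; [exact Hw |].
    rewrite Nat2Z.inj_succ, Z.pow_succ_r by lia. ring.
  - exists 0%nat, z. split; [now apply Z.odd_spec | simpl Z.of_nat; ring].
Qed.

Lemma Z_odd_neq_mul_pow2 (u v : Z) (n : nat) :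
  Z.odd u = true -> (1 <= n)%nat -> u <> (v * 2 ^ Z.of_nat n)%Z.
Proof.
  intros Hu Hn ->. now rewrite Z.odd_mul, Z_odd_pow2, Bool.andb_false_r in Hu.
Qed.

Lemma odd_mul_pow2_inj (u v : Z) (i j : nat) : Z.odd u = true -> Z.odd v = true ->
  (u * 2 ^ Z.of_nat i = v * 2 ^ Z.of_nat j)%Z -> i = j.
Proof.
  assert (cancel : forall (u v : Z) (i j : nat), Z.odd u = true -> (i < j)%nat ->
            (u * 2 ^ Z.of_nat i <> v * 2 ^ Z.of_nat j)%Z).
  { clear. intros u v i j Hu Hij Heq.
    apply (Z_odd_neq_mul_pow2 u v (j - i)); [exact Hu | lia |].
    apply (Z.mul_reg_r _ _ (2 ^ Z.of_nat i)); [apply Z.pow_nonzero; lia |].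
    rewrite Heq, <- Z.mul_assoc, <- Z.pow_add_r by lia. f_equal. f_equal. lia. }
  intros Hu Hv Heq. destruct (Nat.lt_total i j) as [Hij | [Hij | Hij]]; [| exact Hij |].
  - now destruct (cancel u v i j Hu Hij).
  - symmetry in Heq. now destruct (cancel v u j i Hv Hij).
Qed.

Lemma odd_over_pow2_unique (e1 e2 : nat) (z : R) :
  odd_over_pow2 e1 z -> odd_over_pow2 e2 z -> e1 = e2.
Proof.
  intros [a1 [b1 [Ha1 [Hb1 ->]]]] [a2 [b2 [Ha2 [Hb2 Hz]]]].
  pose proof (IZR_odd_neq0 b1 Hb1). pose proof (IZR_odd_neq0 b2 Hb2).
  assert (2 ^ e1 <> 0) by (apply pow_nonzero; lra).
  assert (2 ^ e2 <> 0) by (apply pow_nonzero; lra).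
  symmetry. apply (odd_mul_pow2_inj (a1 * b2) (a2 * b1));
    try (rewrite Z.odd_mul; apply andb_true_intro; now split).
  apply eq_IZR. rewrite !mult_IZR, <- !pow_IZR.
  apply (Rmult_eq_reg_r (/ (IZR b1 * 2 ^ e1 * (IZR b2 * 2 ^ e2)))).
  - replace (IZR a1 * IZR b2 * 2 ^ e2 * / (IZR b1 * 2 ^ e1 * (IZR b2 * 2 ^ e2)))
      with (IZR a1 / (IZR b1 * 2 ^ e1)) by (field; auto).
    rewrite Hz. field. auto.
  - apply Rinv_neq_0_compat. repeat apply Rmult_integral_contrapositive_currified; auto.
Qed.

Lemma odd_over_pow2_neq0 (e : nat) (z : R) : odd_over_pow2 e z -> z <> 0.
Proof.
  intros [a [b [Ha [Hb ->]]]].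
  pose proof (IZR_odd_neq0 a Ha). pose proof (IZR_odd_neq0 b Hb).
  assert (2 ^ e <> 0) by (apply pow_nonzero; lra).
  unfold Rdiv. apply Rmult_integral_contrapositive_currified; [auto |].
  apply Rinv_neq_0_compat, Rmult_integral_contrapositive_currified; auto.
Qed.

Lemma odd_over_pow2_sqr_neq1 (e : nat) (z : R) :
  (1 <= e)%nat -> odd_over_pow2 e z -> z ^ 2 <> 1.
Proof.
  intros He [a [b [Ha [Hb Hz]]]] Hz1.
  enough (e + e = 0)%nat by lia.
  apply (odd_over_pow2_unique _ _ 1).
  - exists (a * a)%Z, (b * b)%Z. rewrite !Z.odd_mul, Ha, Hb.
    split; [reflexivity | split; [reflexivity |]].
    rewrite <- Hz1, Hz, !mult_IZR, pow_add.
    pose proof (IZR_odd_neq0 b Hb). assert (2 ^ e <> 0) by (apply pow_nonzero; lra).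
    field. auto.
  - exists 1%Z, 1%Z. split; [reflexivity | split; [reflexivity |]]. simpl. field.
Qed.

Lemma odd_over_pow2_double (e : nat) (w : R) : (1 <= e)%nat -> odd_over_pow2 e w ->
  odd_over_pow2 (e + 2) ((w ^ 2 + 1) ^ 2 / (4 * w * (w ^ 2 - 1))).
Proof.
  intros He [a [b [Ha [Hb Hw]]]].
  set (E := (2 ^ Z.of_nat e)%Z).
  assert (HE : Z.odd E = false) by now apply Z_odd_pow2.
  assert (Hsum : Z.odd (a * a + b * b * (E * E)) = true)
    by (rewrite Z.odd_add, !Z.odd_mul, Ha, Hb, HE; reflexivity).
  assert (Hdif : Z.odd (a * a - b * b * (E * E)) = true)
    by (rewrite Z.odd_sub, !Z.odd_mul, Ha, Hb, HE; reflexivity).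
  exists ((a * a + b * b * (E * E)) * (a * a + b * b * (E * E)))%Z,
         (a * b * (a * a - b * b * (E * E)))%Z.
  split; [now rewrite Z.odd_mul, Hsum |].
  split; [now rewrite !Z.odd_mul, Ha, Hb, Hdif |].
  pose proof (IZR_odd_neq0 a Ha). pose proof (IZR_odd_neq0 b Hb).
  pose proof (IZR_odd_neq0 _ Hdif).
  assert (IZR E <> 0) by (apply not_0_IZR, Z.pow_nonzero; lia).
  rewrite Hw, pow_add, pow_IZR. fold E.
  rewrite !mult_IZR, ?plus_IZR, ?minus_IZR, !mult_IZR in *.
  field. repeat split; auto.
Qed.

(* [x / M] at the double of the base point [(-4, 4k)] of the curve attached to [m], see
   [curve_base_point_double] *)
Definition seed (m : R) : R :=
  (m ^ 4 + 6 * m ^ 2 + 1) ^ 2 / (8 * m * (1 - m ^ 2) ^ 2 * (1 + m ^ 2)).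

Lemma seed_frac (p q : R) : p <> 0 -> q <> 0 -> q ^ 2 - p ^ 2 <> 0 ->
  seed (p / q) = ((q ^ 2) ^ 2 + 6 * p ^ 2 * q ^ 2 + (p ^ 2) ^ 2) ^ 2
                 / (8 * (p * q) * (q ^ 2 - p ^ 2) ^ 2 * (q ^ 2 + p ^ 2)).
Proof.
  intros Hp Hq Hpq. unfold seed.
  assert (0 < q ^ 2 + p ^ 2) by (pose proof (pow2_pos q Hq); nra).
  field. repeat split; auto; lra.
Qed.

Lemma seed_both_odd (p q : Z) : Z.odd p = true -> Z.odd q = true -> (p * p <> q * q)%Z ->
  exists e, (1 <= e)%nat /\ odd_over_pow2 e (seed (IZR p / IZR q)).
Proof.
  intros Hp Hq Hpq.
  destruct (Z_odd_square p Hp) as [A HA], (Z_odd_square q Hq) as [B HB].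
  destruct (Z_odd_part (B - A)) as [f [w [Hw Hf]]]; [lia |].
  (* with [p^2 = 8A + 1] and [q^2 = 8B + 1]: [q^4 + 6 p^2 q^2 + p^4 = 8 s],
     [q^2 + p^2 = 2 r] and [q^2 - p^2 = 2^(f+3) w], with [s], [r], [w] odd *)
  set (s := (8 * (A + B) * (A + B) + 8 * (A + B) + 32 * A * B + 1)%Z).
  set (r := (4 * A + 4 * B + 1)%Z).
  assert (Hs : Z.odd s = true).
  { replace s with (1 + 2 * (4 * (A + B) * (A + B) + 4 * (A + B) + 16 * A * B))%Z
      by (unfold s; ring).
    apply Z.odd_add_mul_2. }
  assert (Hr : Z.odd r = true).
  { replace r with (1 + 2 * (2 * A + 2 * B))%Z by (unfold r; ring). apply Z.odd_add_mul_2. }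
  exists (4 + 2 * f)%nat. split; [lia |].
  exists (s * s)%Z, (p * q * (w * w) * r)%Z.
  split; [now rewrite Z.odd_mul, Hs |].
  split; [now rewrite !Z.odd_mul, Hp, Hq, Hw, Hr |].
  assert (HP : IZR p ^ 2 = 8 * IZR A + 1) by (rewrite IZR_sqr, HA, plus_IZR, mult_IZR; ring).
  assert (HQ : IZR q ^ 2 = 8 * IZR B + 1) by (rewrite IZR_sqr, HB, plus_IZR, mult_IZR; ring).
  assert (HBA : IZR B = IZR A + 2 ^ f * IZR w)
    by (rewrite pow_IZR, <- mult_IZR, <- Hf, minus_IZR; ring).
  pose proof (IZR_odd_neq0 p Hp). pose proof (IZR_odd_neq0 q Hq).
  assert (H2w : 2 ^ f * IZR w <> 0).
  { apply Rmult_integral_contrapositive_currified;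
      [apply pow_nonzero; lra | now apply IZR_odd_neq0]. }
  assert (4 * IZR A + 4 * IZR B + 1 <> 0).
  { pose proof (IZR_odd_neq0 r Hr). unfold r in *. now repeat rewrite ?plus_IZR, ?mult_IZR in *. }
  rewrite seed_frac, HP, HQ, HBA by (auto; rewrite HP, HQ, HBA; lra).
  unfold s, r. repeat rewrite ?mult_IZR, ?plus_IZR. rewrite HBA, pow_add, Nat.mul_comm, pow_mult.
  field. repeat split; try lra; intros Hc; apply H2w; rewrite Hc; ring.
Qed.

Lemma seed_one_even (p q r : Z) (f : nat) : Z.odd (p * p + q * q) = true ->
  Z.odd r = true -> (1 <= f)%nat -> (p * q = 2 ^ Z.of_nat f * r)%Z ->
  exists e, (1 <= e)%nat /\ odd_over_pow2 e (seed (IZR p / IZR q)).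
Proof.
  intros HU Hr Hf Hpq.
  set (P := (p * p)%Z) in *. set (Q := (q * q)%Z) in *.
  set (S := (Q * Q + 6 * P * Q + P * P)%Z).
  set (D := (Q - P)%Z). set (U := (Q + P)%Z).
  assert (HU' : Z.odd U = true) by (unfold U; now rewrite Z.add_comm).
  assert (HS : Z.odd S = true).
  { replace S with (U * U + 2 * (2 * P * Q))%Z by (unfold S, U; ring).
    now rewrite Z.odd_add_mul_2, Z.odd_mul, HU'. }
  assert (HD : Z.odd D = true).
  { replace D with (U + 2 * (- P))%Z by (unfold D, U; ring). now rewrite Z.odd_add_mul_2. }
  exists (3 + f)%nat. split; [lia |].
  exists (S * S)%Z, (r * (D * D) * U)%Z.
  split; [now rewrite Z.odd_mul, HS |].
  split; [now rewrite !Z.odd_mul, Hr, HD, HU' |].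
  assert (Hpq' : IZR p * IZR q = 2 ^ f * IZR r) by (rewrite pow_IZR, <- !mult_IZR; now f_equal).
  assert (IZR p <> 0 /\ IZR q <> 0) as [].
  { apply Rmult_neq_0_reg. rewrite Hpq'.
    apply Rmult_integral_contrapositive_currified;
      [apply pow_nonzero; lra | now apply IZR_odd_neq0]. }
  pose proof (IZR_odd_neq0 r Hr). pose proof (IZR_odd_neq0 U HU'). pose proof (IZR_odd_neq0 D HD).
  assert (2 ^ f <> 0) by (apply pow_nonzero; lra).
  unfold U, D in *. rewrite ?plus_IZR, ?minus_IZR in *.
  rewrite seed_frac, !IZR_sqr, Hpq' by (auto; rewrite !IZR_sqr; auto).
  fold P Q. unfold S. repeat rewrite ?mult_IZR, ?plus_IZR, ?minus_IZR.
  rewrite pow_add. field. auto.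
Qed.

Lemma Z_odd_false_divide (p : Z) : Z.odd p = false -> (2 | p)%Z.
Proof.
  intros Hp. destruct (Z.Even_or_Odd p) as [[b ->] | Ho].
  - now exists b; ring.
  - apply Z.odd_spec in Ho. congruence.
Qed.

Lemma seed_odd_over_pow2 (p q : Z) : Z.gcd p q = 1%Z -> p <> 0%Z -> q <> 0%Z ->
  (p * p <> q * q)%Z -> exists e, (1 <= e)%nat /\ odd_over_pow2 e (seed (IZR p / IZR q)).
Proof.
  intros Hgcd Hp Hq Hpq.
  assert (one_even : Z.odd (p * q) = false -> Z.odd (p * p + q * q) = true ->
            exists e, (1 <= e)%nat /\ odd_over_pow2 e (seed (IZR p / IZR q))).
  { intros Hprod Hsum. destruct (Z_odd_part (p * q)) as [f [r [Hr Hf]]]; [lia |].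
    apply (seed_one_even p q r f); auto.
    destruct f; [| lia]. simpl Z.of_nat in Hf. rewrite Z.mul_1_l in Hf. congruence. }
  destruct (Z.odd p) eqn:Hop, (Z.odd q) eqn:Hoq.
  - now apply seed_both_odd.
  - apply one_even; now rewrite ?Z.odd_add, !Z.odd_mul, Hop, Hoq.
  - apply one_even; now rewrite ?Z.odd_add, !Z.odd_mul, Hop, Hoq.
  - assert (H2 : (2 | 1)%Z).
    { rewrite <- Hgcd. apply Z.gcd_greatest; now apply Z_odd_false_divide. }
    apply Z.divide_1_r in H2. lia.
Qed.

(** * The curve y^2 = x^3 - M^2 x *)

Definition on_curve (M x y : R) : Prop := y ^ 2 = x ^ 3 - M ^ 2 * x.

Definition ec_double (M : R) (P : R * R) : R * R :=
  let (x, y) := P in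
  let l := (3 * x ^ 2 - M ^ 2) / (2 * y) in
  (l ^ 2 - 2 * x, l * (x - (l ^ 2 - 2 * x)) - y).

Definition ec_chord (x1 y1 x2 y2 : R) : R * R :=
  let l := (y2 - y1) / (x2 - x1) in
  (l ^ 2 - x1 - x2, l * (x1 - (l ^ 2 - x1 - x2)) - y1).

Lemma on_curve_y_neq0 (M x y : R) : on_curve M x y -> x <> 0 -> x ^ 2 <> M ^ 2 -> y <> 0.
Proof.
  unfold on_curve. intros Hxy Hx HxM ->.
  assert (x * (x ^ 2 - M ^ 2) <> 0) by (apply Rmult_integral_contrapositive_currified; lra).
  lra.
Qed.

Lemma on_curve_double (M x y : R) : on_curve M x y -> y <> 0 ->
  on_curve M (fst (ec_double M (x, y))) (snd (ec_double M (x, y))).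
Proof.
  unfold on_curve. cbv beta iota zeta delta [ec_double fst snd]. intros Hxy Hy.
  set (l := (3 * x ^ 2 - M ^ 2) / (2 * y)).
  assert (Hl : l * (2 * y) = 3 * x ^ 2 - M ^ 2) by (unfold l; field; auto).
  set (N := M ^ 2) in *. clearbody l N.
  apply (Rmult_eq_reg_r y); [| exact Hy]. cbn [pow] in *. nsatz.
Qed.

Lemma double_x (M x y : R) : on_curve M x y -> y <> 0 ->
  fst (ec_double M (x, y)) = (x ^ 2 + M ^ 2) ^ 2 / (4 * y ^ 2).
Proof.
  unfold on_curve. cbv beta iota zeta delta [ec_double fst snd]. intros Hxy Hy.
  apply (Rmult_eq_reg_r (4 * y ^ 2)); [| pose proof (pow2_pos y Hy); lra].
  field_simplify; [| auto ..]. rewrite Hxy. ring.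
Qed.

Lemma on_curve_chord (M x1 y1 x2 y2 : R) : on_curve M x1 y1 -> on_curve M x2 y2 -> x1 <> x2 ->
  on_curve M (fst (ec_chord x1 y1 x2 y2)) (snd (ec_chord x1 y1 x2 y2)).
Proof.
  unfold on_curve. cbv beta iota zeta delta [ec_chord fst snd]. intros H1 H2 Hx.
  set (l := (y2 - y1) / (x2 - x1)).
  assert (Hl : l * (x2 - x1) = y2 - y1) by (unfold l; field; lra).
  set (N := M ^ 2) in *. clearbody l N.
  apply (Rmult_eq_reg_r (x2 - x1)); [| lra]. cbn [pow] in *. nsatz.
Qed.

Lemma double_x_ge (M x y : R) : 0 <= M -> on_curve M x y -> y <> 0 ->
  M <= fst (ec_double M (x, y)).
Proof.
  intros HM Hxy Hy. rewrite (double_x M x y Hxy Hy).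
  pose proof (pow2_pos y Hy).
  assert (E : (x ^ 2 + M ^ 2) ^ 2 - 4 * M * y ^ 2 = (x ^ 2 - 2 * M * x - M ^ 2) ^ 2)
    by (unfold on_curve in Hxy; rewrite Hxy; ring).
  pose proof (pow2_ge_0 (x ^ 2 - 2 * M * x - M ^ 2)).
  apply (Rmult_le_reg_r (4 * y ^ 2)); [lra |].
  unfold Rdiv. rewrite Rmult_assoc, Rinv_l, Rmult_1_r; lra.
Qed.

Lemma double_x_div (M x y : R) : M <> 0 -> on_curve M x y -> y <> 0 ->
  fst (ec_double M (x, y)) / M = ((x / M) ^ 2 + 1) ^ 2 / (4 * (x / M) * ((x / M) ^ 2 - 1)).
Proof.
  intros HM Hxy Hy. rewrite (double_x M x y Hxy Hy).
  unfold on_curve in Hxy. rewrite Hxy.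
  assert (x <> 0 /\ x ^ 2 - M ^ 2 <> 0) as [].
  { apply Rmult_neq_0_reg. replace (x * (x ^ 2 - M ^ 2)) with (y ^ 2) by (rewrite Hxy; ring).
    now apply pow_nonzero. }
  pose proof (pow_nonzero M 2 HM).
  field. rewrite <- Hxy. repeat split; auto. now apply pow_nonzero.
Qed.

Lemma chord_x_gt (M K x1 y1 x2 y2 : R) : 0 < M ->
  on_curve M x1 y1 -> on_curve M x2 y2 -> M <= x1 <= K -> M <= x2 <= K ->
  0 <= y1 -> y2 <= 0 -> x1 <> x2 -> 3 * K * Rabs (x1 - x2) < 2 * M ^ 2 ->
  K < fst (ec_chord x1 y1 x2 y2).
Proof.
  intros HM H1 H2 Hx1 Hx2 Hy1 Hy2 Hx Hclose. cbv beta zeta delta [ec_chord fst].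
  set (l := (y2 - y1) / (x2 - x1)). set (d := x1 - x2) in *.
  assert (Hl : l * d = y1 - y2) by (unfold l, d; field; lra).
  set (g := x1 ^ 2 + x1 * x2 + x2 ^ 2 - M ^ 2).
  assert (Hg : 2 * M ^ 2 <= g) by (unfold g; nra).
  assert (Hdiff : y1 ^ 2 - y2 ^ 2 = d * g)
    by (unfold on_curve in H1, H2; rewrite H1, H2; unfold d, g; ring).
  assert (Had : 0 < Rabs d) by (apply Rabs_pos_lt; unfold d; lra).
  (* the chord is steep: [|d| g = |y1^2 - y2^2| <= (y1 - y2)^2 = l^2 d^2] *)
  assert (Hsteep : Rabs d * g <= l ^ 2 * Rabs d ^ 2).
  { rewrite pow2_abs. replace (l ^ 2 * d ^ 2) with ((y1 - y2) ^ 2) by (rewrite <- Hl; ring).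
    rewrite <- (Rabs_pos_eq g) by nra. rewrite <- Rabs_mult, <- Hdiff.
    apply Rabs_le. split; nra. }
  assert (3 * K < l ^ 2) by nra.
  lra.
Qed.

Lemma bounded_seq_close_terms (x : nat -> R) (a b d : R) :
  (forall j, a <= x j <= b) -> 0 < d -> exists i j, i <> j /\ Rabs (x i - x j) < d.
Proof.
  intros Hab Hd.
  (* [L] is the limit superior of [x] *)
  set (E := fun y => forall J, exists j, (J <= j)%nat /\ y <= x j).
  destruct (completeness E) as [L [HL_ub HL_lub]].
  - exists b. intros y Hy. destruct (Hy O) as [j [_ Hj]]. specialize (Hab j). lra.
  - exists a. intros J. exists J. split; [lia | apply Hab].
  - assert (Hbelow : exists y, E y /\ L - d / 2 < y).
    { apply NNPP. intros Hno. enough (L <= L - d / 2) by lra.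
      apply HL_lub. intros y Hy. apply Rnot_lt_le. intros Hlt. apply Hno. now exists y. }
    assert (Habove : exists J, forall j, (J <= j)%nat -> x j < L + d / 2).
    { apply NNPP. intros Hno. enough (L + d / 2 <= L) by lra.
      apply HL_ub. intros J. apply NNPP. intros HJ. apply Hno. exists J. intros j Hj.
      apply Rnot_le_lt. intros Hle. apply HJ. now exists j. }
    destruct Hbelow as [y [Hy HLy]], Habove as [J HJ].
    destruct (Hy J) as [i [Hi Hxi]], (Hy (S i)) as [j [Hj Hxj]].
    exists i, j. split; [lia |].
    specialize (HJ i Hi) as Hi'. specialize (HJ j ltac:(lia)) as Hj'.
    apply Rabs_def1; lra.
Qed.

Section LargePoints.

Variables (M x0 y0 : R) (e0 : nat).
Hypothesis M_pos : 0 < M.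
Hypothesis M_rat : is_rat M.
Hypothesis P0_on_curve : on_curve M x0 y0.
Hypothesis x0_rat : is_rat x0.
Hypothesis y0_rat : is_rat y0.
Hypothesis y0_neq0 : y0 <> 0.
Hypothesis e0_pos : (1 <= e0)%nat.
Hypothesis seed_2P0 : odd_over_pow2 e0 (fst (ec_double M (x0, y0)) / M).

Definition rational_point (P : R * R) : Prop :=
  on_curve M (fst P) (snd P) /\ is_rat (fst P) /\ is_rat (snd P).

Lemma rational_point_double (x y : R) : rational_point (x, y) -> y <> 0 ->
  rational_point (ec_double M (x, y)).
Proof.
  intros [Hxy [Hx Hy]] Hy0. split; [now apply on_curve_double |].
  cbv beta iota zeta delta [ec_double fst snd]. split; solve_rat.
Qed.

Lemma rational_point_chord (x1 y1 x2 y2 : R) : rational_point (x1, y1) -> rational_point (x2, y2) ->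
  x1 <> x2 -> rational_point (ec_chord x1 y1 x2 y2).
Proof.
  intros [H1 [Hx1 Hy1]] [H2 [Hx2 Hy2]] Hx. split; [now apply on_curve_chord |].
  cbv beta zeta delta [ec_chord fst snd]. split; solve_rat.
Qed.

Lemma rational_point_opp (x y : R) : rational_point (x, y) -> rational_point (x, - y).
Proof.
  intros [Hxy [Hx Hy]]. split; [| split; solve_rat].
  unfold on_curve in *. cbn [fst snd] in *. rewrite <- Hxy. ring.
Qed.

Lemma rational_point_abs (x y : R) : rational_point (x, y) -> rational_point (x, Rabs y).
Proof.
  intros HP. destruct (Rle_or_lt 0 y).
  - now rewrite Rabs_pos_eq.
  - rewrite Rabs_left by lra. now apply rational_point_opp.
Qed.

Definition level_point (e : nat) (P : R * R) : Prop :=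
  rational_point P /\ M <= fst P /\ odd_over_pow2 e (fst P / M).

Lemma level_point_double (e : nat) (P : R * R) : (1 <= e)%nat -> level_point e P ->
  level_point (e + 2) (ec_double M P).
Proof.
  destruct P as [x y]. intros He [HP [HM Hw]]. cbn [fst snd] in *.
  assert (y <> 0).
  { pose proof (odd_over_pow2_neq0 e _ Hw). pose proof (odd_over_pow2_sqr_neq1 e _ He Hw).
    apply (on_curve_y_neq0 M x y); [apply HP | |].
    - intros ->. apply H. unfold Rdiv. ring.
    - intros Hx. apply H0. field_simplify; [rewrite Hx; field |]; lra. }
  split; [now apply rational_point_double |].
  split; [apply double_x_ge; [lra | apply HP | auto] |].
  rewrite double_x_div by (lra || apply HP || auto).
  now apply odd_over_pow2_double.
Qed.

Definition pow2_multiple (j : nat) : R * R := Nat.iter (S j) (ec_double M) (x0, y0).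

Lemma level_point_pow2_multiple (j : nat) : level_point (e0 + 2 * j) (pow2_multiple j).
Proof.
  induction j as [| j IH].
  - rewrite Nat.add_0_r. unfold pow2_multiple; cbn [Nat.iter].
    split; [apply rational_point_double; [split; auto | auto] |].
    split; [now apply double_x_ge; [lra | |] | exact seed_2P0].
  - replace (e0 + 2 * S j)%nat with (e0 + 2 * j + 2)%nat by lia.
    apply (level_point_double _ (pow2_multiple j)); [lia | exact IH].
Qed.

Lemma pow2_multiple_x_injective (i j : nat) :
  i <> j -> fst (pow2_multiple i) <> fst (pow2_multiple j).
Proof.
  intros Hij Hx. apply Hij.
  destruct (level_point_pow2_multiple i) as [_ [_ Hi]], (level_point_pow2_multiple j) as [_ [_ Hj]].
  rewrite Hx in Hi. pose proof (odd_over_pow2_unique _ _ _ Hi Hj). lia.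
Qed.

Lemma exists_large_point (K : R) : exists u v, rational_point (u, v) /\ K < u /\ v < 0.
Proof.
  set (K' := Rmax K M).
  assert (HK' : K <= K' /\ M <= K') by (split; [apply Rmax_l | apply Rmax_r]).
  assert (from_point : forall u v, rational_point (u, v) -> K' < u ->
            exists u v, rational_point (u, v) /\ K < u /\ v < 0).
  { intros u v Huv Hu. exists u, (- Rabs v).
    split; [now apply rational_point_opp, rational_point_abs |]. split; [lra |].
    enough (v <> 0) by (pose proof (Rabs_pos_lt v H); lra).
    apply (on_curve_y_neq0 M u v); [apply Huv | lra | nra]. }
  destruct (classic (exists j, K' < fst (pow2_multiple j))) as [[j Hj] | Hbounded].
  - apply (from_point (fst (pow2_multiple j)) (snd (pow2_multiple j))); [| exact Hj].
    rewrite <- surjective_pairing. apply level_point_pow2_multiple.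
  - assert (Hb : forall j, M <= fst (pow2_multiple j) <= K').
    { intros j. split; [apply level_point_pow2_multiple |].
      apply Rnot_lt_le. intros Hj. apply Hbounded. now exists j. }
    destruct (bounded_seq_close_terms (fun j => fst (pow2_multiple j)) M K'
                (2 * M ^ 2 / (3 * K')) Hb)
      as [i [j [Hij Hclose]]]; [apply Rdiv_lt_0_compat; nra |].
    pose proof (pow2_multiple_x_injective i j Hij) as Hx.
    destruct (level_point_pow2_multiple i) as [Hi _], (level_point_pow2_multiple j) as [Hj _].
    pose proof (Hb i) as Hbi. pose proof (Hb j) as Hbj. cbn beta in Hclose.
    destruct (pow2_multiple i) as [xi yi], (pow2_multiple j) as [xj yj]. cbn [fst snd] in *.
    apply rational_point_abs in Hi. apply rational_point_abs, rational_point_opp in Hj.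
    set (C := ec_chord xi (Rabs yi) xj (- Rabs yj)).
    apply (from_point (fst C) (snd C)).
    + rewrite <- surjective_pairing. now apply rational_point_chord.
    + pose proof (Rabs_pos yi). pose proof (Rabs_pos yj).
      apply (chord_x_gt M); try lra; [apply Hi | apply Hj |].
      apply (Rmult_lt_reg_r (/ (3 * K'))); [apply Rinv_0_lt_compat; lra |].
      replace (3 * K' * Rabs (xi - xj) * / (3 * K')) with (Rabs (xi - xj)) by (field; lra).
      exact Hclose.
Qed.

End LargePoints.

(** * The quartic *)

Definition quartic (k t : R) : R := t ^ 4 - 2 * k * t ^ 3 - 6 * t ^ 2 + 2 * k * t + 1.

(* [(t, W)] is read off the line through the point [(-4, 4 k)] of the curve and [(u, v)] *)
Definition quartic_of_curve (k u v : R) : R * R :=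
  let l := (v + 4 * k) / (u + 4) in
  let t := 2 * (k - l) / u in
  (t, (2 * t ^ 2 - 2 * k * t + u * t ^ 2 - 2) / 2).

Lemma quartic_of_curve_spec (k M u v : R) : M ^ 2 = 16 + 4 * k ^ 2 -> on_curve M u v -> 0 < u ->
  snd (quartic_of_curve k u v) ^ 2 = quartic k (fst (quartic_of_curve k u v)).
Proof.
  intros HM Huv Hu. cbv beta zeta delta [quartic_of_curve fst snd].
  set (l := (v + 4 * k) / (u + 4)). set (t := 2 * (k - l) / u).
  assert (Hv : v = k * u - t * u * (u + 4) / 2) by (unfold t, l; field; lra).
  set (Rt := t ^ 2 * u ^ 2 + (4 * t ^ 2 - 4 * k * t - 4) * u + 4 * k ^ 2 + 16).
  assert (HR : u * (u + 4) * Rt = 0).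
  { unfold on_curve in Huv. rewrite HM in Huv.
    transitivity (- 4 * (u ^ 3 - (16 + 4 * k ^ 2) * u - v ^ 2)); [rewrite Hv; unfold Rt; field |].
    rewrite Huv. ring. }
  assert (HRt : Rt = 0).
  { apply Rmult_integral in HR as [HR | HR]; [| exact HR].
    apply Rmult_integral in HR as [HR | HR]; lra. }
  transitivity (quartic k t + t ^ 2 * Rt / 4); [unfold quartic, Rt; field |].
  rewrite HRt. field.
Qed.

Lemma quartic_of_curve_small (k M u v tau : R) : 0 < k -> 0 < tau ->
  on_curve M u v -> 0 < u -> v < 0 -> 16 <= tau ^ 2 * u -> 4 * k <= tau * u ->
  0 < fst (quartic_of_curve k u v) < tau.
Proof.
  intros Hk Htau Huv Hu Hv Hu16 Huk. cbv beta zeta delta [quartic_of_curve fst].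
  set (l := (v + 4 * k) / (u + 4)).
  assert (Hl : k - l = (k * u - v) / (u + 4)) by (unfold l; field; lra).
  assert (Hkl : 0 < k - l) by (rewrite Hl; apply Rdiv_lt_0_compat; nra).
  assert (Hw : - v <= tau * u ^ 2 / 4).
  { unfold on_curve in Huv.
    assert (0 <= u ^ 3 * (tau ^ 2 * u - 16)) by (apply Rmult_le_pos; [apply pow_le |]; lra).
    assert (0 <= M ^ 2 * u) by (apply Rmult_le_pos; [apply pow2_ge_0 | lra]).
    assert (v ^ 2 <= (tau * u ^ 2 / 4) ^ 2) by nra.
    apply Rsqr_incr_0_var; [unfold Rsqr; nra |].
    apply Rmult_le_pos; [apply Rmult_le_pos; [lra | apply pow2_ge_0] | lra]. }
  assert ((k - l) * u < tau * u ^ 2 / 2).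
  { apply (Rlt_le_trans _ ((k - l) * (u + 4))); [nra |].
    rewrite Hl. unfold Rdiv. rewrite Rmult_assoc, Rinv_l, Rmult_1_r by lra. nra. }
  split.
  - apply Rdiv_lt_0_compat; lra.
  - apply (Rmult_lt_reg_r u); [lra |]. unfold Rdiv. rewrite Rmult_assoc, Rinv_l, Rmult_1_r by lra.
    nra.
Qed.

(** * Right-angled hyperbolic triangles *)

Lemma right_triangle_cosh_sqr (sa ca sb cb s : R) : sa <> 0 -> sb <> 0 ->
  sa ^ 2 + ca ^ 2 = 1 -> sb ^ 2 + cb ^ 2 = 1 -> s ^ 2 = (ca * cb / (sa * sb)) ^ 2 - 1 ->
  (ca / sb) ^ 2 = (sa * s) ^ 2 + 1 /\ (cb / sa) ^ 2 = (sb * s) ^ 2 + 1.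
Proof.
  intros Hsa Hsb Ha Hb Hs.
  replace ((sa * s) ^ 2) with (sa ^ 2 * s ^ 2) by ring.
  replace ((sb * s) ^ 2) with (sb ^ 2 * s ^ 2) by ring.
  rewrite Hs. split; field_simplify_eq; auto; cbn [pow] in *; nsatz.
Qed.

Lemma exp_cosh_sinh (x : R) : exp x = cosh x + sinh x.
Proof. unfold cosh, sinh. field. Qed.

Lemma exp_arcsinh (s c : R) : 0 <= c -> c ^ 2 = s ^ 2 + 1 -> exp (arcsinh s) = s + c.
Proof.
  intros Hc Hcs. unfold arcsinh. rewrite <- Hcs, sqrt_pow2 by exact Hc.
  apply exp_ln. nra.
Qed.

Lemma cosh_arcsinh (s c : R) : 0 <= c -> c ^ 2 = s ^ 2 + 1 -> cosh (arcsinh s) = c.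
Proof.
  intros Hc Hcs. unfold cosh. rewrite exp_Ropp, (exp_arcsinh s c Hc Hcs).
  assert (s + c <> 0) by nra.
  field_simplify_eq; [| exact H]. nra.
Qed.

Lemma arcsinh_pos (s : R) : 0 < s -> 0 < arcsinh s.
Proof.
  intros Hs. rewrite <- (arcsinh_sinh 0), sinh_0. now apply arcsinh_lt.
Qed.

Definition right_triangle (al be s : R) : htri :=
  mk_htri (arcsinh (sin al * s)) (arcsinh (sin be * s)) (arcsinh s) al be (PI / 2).

Section RightTriangle.

Variables al be s : R.
Hypothesis al_pos : 0 < al.
Hypothesis be_pos : 0 < be.
Hypothesis al_be_lt : al + be < PI / 2.
Hypothesis s_pos : 0 < s.
Hypothesis s_sqr : s ^ 2 = (cos al * cos be / (sin al * sin be)) ^ 2 - 1.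

Lemma right_triangle_trig :
  0 < sin al /\ 0 < cos al /\ 0 < sin be /\ 0 < cos be /\
  sin al ^ 2 + cos al ^ 2 = 1 /\ sin be ^ 2 + cos be ^ 2 = 1.
Proof.
  pose proof PI_RGT_0.
  repeat split; try (apply sin_gt_0 || apply cos_gt_0); try lra;
    rewrite <- !Rsqr_pow2; apply sin2_cos2.
Qed.

Lemma right_triangle_cosh :
  cosh (ta (right_triangle al be s)) = cos al / sin be /\
  cosh (tb (right_triangle al be s)) = cos be / sin al /\
  cosh (tc (right_triangle al be s)) = cos al * cos be / (sin al * sin be).
Proof.
  destruct right_triangle_trig as [Hsa [Hca [Hsb [Hcb [Ha Hb]]]]].
  destruct (right_triangle_cosh_sqr (sin al) (cos al) (sin be) (cos be) s) as [HA HB]; try lra.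
  cbn [ta tb tc right_triangle].
  repeat split; apply cosh_arcsinh; try assumption;
    try (left; repeat apply Rdiv_lt_0_compat || apply Rmult_lt_0_compat; assumption).
  rewrite s_sqr. ring.
Qed.

Lemma right_triangle_is_hyp_triangle : is_hyp_triangle (right_triangle al be s).
Proof.
  destruct right_triangle_trig as [Hsa [Hca [Hsb [Hcb [Ha Hb]]]]].
  destruct right_triangle_cosh as [HA [HB HC]].
  pose proof PI_RGT_0.
  unfold is_hyp_triangle. rewrite HA, HB, HC. cbn [ta tb tc tal tbe tga right_triangle].
  rewrite !sinh_arcsinh, cos_PI2.
  repeat split; try apply arcsinh_pos; try apply Rmult_lt_0_compat; try lra.
  - replace (sin be * s * s * cos al) with (sin be * cos al * s ^ 2) by ring.
    rewrite s_sqr. field_simplify_eq; try lra. clear - Ha Hb. cbn [pow] in *. nsatz.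
  - replace (s * (sin al * s) * cos be) with (sin al * cos be * s ^ 2) by ring.
    rewrite s_sqr. field_simplify_eq; try lra. clear - Ha Hb. cbn [pow] in *. nsatz.
  - field. lra.
Qed.

Lemma right_triangle_sides_lt : sin al < sin be ->
  ta (right_triangle al be s) < tb (right_triangle al be s) < tc (right_triangle al be s).
Proof.
  destruct right_triangle_trig as [Hsa [Hca [Hsb [Hcb [Ha Hb]]]]].
  intros Hab. cbn [ta tb tc right_triangle].
  split; apply arcsinh_lt; [nra |].
  assert (sin be < 1) by nra. nra.
Qed.

End RightTriangle.

(** * The Heron triangles *)

Lemma sqrt_1_plus_sqr (x : R) : sqrt (1 + x²) ^ 2 = 1 + x ^ 2 /\ sqrt (1 + x²) <> 0.
Proof.
  rewrite Rsqr_pow2, pow2_sqrt by (pose proof (pow2_ge_0 x); lra). split; [reflexivity |].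
  apply Rgt_not_eq, sqrt_lt_R0. pose proof (pow2_ge_0 x). lra.
Qed.

Lemma cos_2atan (x : R) : cos (2 * atan x) = (1 - x ^ 2) / (1 + x ^ 2).
Proof.
  destruct (sqrt_1_plus_sqr x) as [Hs Hs0]. pose proof (pow2_ge_0 x).
  rewrite cos_2a_cos, cos_atan.
  replace (2 * (1 / sqrt (1 + x²)) * (1 / sqrt (1 + x²)) - 1) with (2 / sqrt (1 + x²) ^ 2 - 1)
    by (field; exact Hs0).
  rewrite Hs. field. lra.
Qed.

Lemma sin_2atan (x : R) : sin (2 * atan x) = 2 * x / (1 + x ^ 2).
Proof.
  destruct (sqrt_1_plus_sqr x) as [Hs Hs0]. pose proof (pow2_ge_0 x).
  rewrite sin_2a, cos_atan, sin_atan.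
  replace (2 * (x / sqrt (1 + x²)) * (1 / sqrt (1 + x²))) with (2 * x / sqrt (1 + x²) ^ 2)
    by (field; exact Hs0).
  now rewrite Hs.
Qed.

Lemma in_Qi_2atan (x : R) : is_rat x -> in_Qi (cos (2 * atan x)) (sin (2 * atan x)).
Proof. intros Hx. rewrite cos_2atan, sin_2atan. split; solve_rat. Qed.

Lemma in_Qi_plus (x y : R) : in_Qi (cos x) (sin x) -> in_Qi (cos y) (sin y) ->
  in_Qi (cos (x + y)) (sin (x + y)).
Proof. intros [Hcx Hsx] [Hcy Hsy]. rewrite cos_plus, sin_plus. split; solve_rat. Qed.

Lemma in_Qi_shift (x : R) : in_Qi (cos x) (sin x) -> in_Qi (cos (PI / 2 - x)) (sin (PI / 2 - x)).
Proof. intros [Hc Hs]. rewrite cos_shift, sin_shift. now split. Qed.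

Lemma sin_add_4atan (m t : R) : m <> 0 ->
  sin (2 * atan m + 2 * (2 * atan t)) * (1 + t ^ 2) ^ 2 =
  sin (2 * atan m) * quartic ((1 - m ^ 2) / m) t.
Proof.
  intros Hm. pose proof (pow2_ge_0 t). pose proof (pow2_ge_0 m).
  rewrite sin_plus, (sin_2a (2 * atan t)), (cos_2a (2 * atan t)), !cos_2atan, !sin_2atan.
  unfold quartic. field. lra.
Qed.

Definition quartic_point (k t W : R) : Prop :=
  is_rat t /\ is_rat W /\ 0 <= W /\ W ^ 2 = quartic k t.

(* [t < tau_max m] means [4 atan t < pi/2 - 2 atan m], which makes [alpha < beta] *)
Definition tau_max (m : R) : R := tan ((PI / 2 - 2 * atan m) / 4).

Lemma atan_pos_lt_PI4 (x : R) : 0 < x < 1 -> 0 < atan x < PI / 4.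
Proof. intros Hx. rewrite <- atan_0, <- atan_1. split; apply atan_increasing; lra. Qed.

Lemma tau_max_pos (m : R) : 0 < m < 1 -> 0 < tau_max m.
Proof.
  intros Hm. pose proof (atan_pos_lt_PI4 m Hm). pose proof PI_RGT_0.
  unfold tau_max, tan. apply Rdiv_lt_0_compat; [apply sin_gt_0 | apply cos_gt_0]; lra.
Qed.

Definition heron_triangle (m t W : R) : htri :=
  let A := 2 * atan m in
  let al := 2 * atan t in
  let be := PI / 2 - A - al in
  right_triangle al be (sin A * W / ((1 + t ^ 2) * sin al * sin be)).

Section HeronTriangle.

Variables m t W : R.
Hypothesis m_pos : 0 < m.
Hypothesis m_lt_1 : m < 1.
Hypothesis m_rat : is_rat m.
Hypothesis t_pos : 0 < t.
Hypothesis t_lt : t < tau_max m.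
Hypothesis tW_quartic : quartic_point ((1 - m ^ 2) / m) t W.

Let A := 2 * atan m.
Let al := 2 * atan t.
Let be := PI / 2 - A - al.
Let s := sin A * W / ((1 + t ^ 2) * sin al * sin be).

Lemma heron_angles : 0 < A < PI / 2 /\ 0 < al /\ al < be.
Proof.
  pose proof PI_RGT_0.
  pose proof (atan_pos_lt_PI4 m (conj m_pos m_lt_1)).
  assert (0 < atan t < (PI / 2 - A) / 4).
  { rewrite <- atan_0, <- (atan_tan ((PI / 2 - A) / 4)) by (unfold A; lra).
    split; now apply atan_increasing. }
  unfold be, A, al in *. repeat split; lra.
Qed.

Lemma heron_sin_pos : 0 < sin A /\ 0 < sin al /\ 0 < sin be.
Proof.
  destruct heron_angles as [[HA0 HA1] [Hal Hbe]]. pose proof PI_RGT_0.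
  repeat split; apply sin_gt_0; unfold be in *; lra.
Qed.

Lemma heron_cos_al_plus_be : cos al * cos be - sin al * sin be = sin A.
Proof.
  rewrite <- cos_plus. replace (al + be) with (PI / 2 - A) by (unfold be; ring).
  apply cos_shift.
Qed.

Lemma heron_sinh_c_sqr : s ^ 2 = (cos al * cos be / (sin al * sin be)) ^ 2 - 1.
Proof.
  destruct heron_sin_pos as [HA [Hal Hbe]]. destruct tW_quartic as [_ [_ [_ HW]]].
  pose proof heron_cos_al_plus_be as Hminus.
  assert (Hplus : cos al * cos be + sin al * sin be = sin (A + 2 * al)).
  { rewrite <- cos_minus. replace (al - be) with (- (PI / 2 - (A + 2 * al))) by (unfold be; ring).
    rewrite cos_neg. apply cos_shift. }
  pose proof (sin_add_4atan m t ltac:(lra)) as Hquartic. fold A al in Hquartic.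
  transitivity ((cos al * cos be - sin al * sin be) * (cos al * cos be + sin al * sin be)
                / (sin al * sin be) ^ 2); [| field; lra].
  rewrite Hminus, Hplus.
  replace (sin (A + 2 * al)) with (sin A * W ^ 2 / (1 + t ^ 2) ^ 2)
    by (rewrite HW, <- Hquartic; field; pose proof (pow2_ge_0 t); lra).
  unfold s. field. pose proof (pow2_ge_0 t). repeat split; lra.
Qed.

Lemma heron_sinh_c_pos : 0 < s.
Proof.
  destruct heron_sin_pos as [HA [Hal Hbe]]. destruct tW_quartic as [_ [_ [HW _]]].
  pose proof heron_cos_al_plus_be. pose proof heron_sinh_c_sqr as Hs.
  assert (0 <= s).
  { unfold s, Rdiv. apply Rmult_le_pos; [nra |]. left. apply Rinv_0_lt_compat.
    pose proof (pow2_ge_0 t). repeat apply Rmult_lt_0_compat; lra. }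
  enough (s <> 0) by lra. intros Hs0.
  assert (1 < cos al * cos be / (sin al * sin be)).
  { apply (Rmult_lt_reg_r (sin al * sin be)); [nra |].
    unfold Rdiv. rewrite Rmult_assoc, Rinv_l, Rmult_1_l, Rmult_1_r; nra. }
  rewrite Hs0 in Hs. nra.
Qed.

Lemma heron_triangle_eq : heron_triangle m t W = right_triangle al be s.
Proof. reflexivity. Qed.

Lemma heron_triangle_is_hyp_triangle : is_hyp_triangle (heron_triangle m t W).
Proof.
  destruct heron_angles as [HA [Hal Hbe]].
  rewrite heron_triangle_eq. apply right_triangle_is_hyp_triangle; try lra.
  - unfold be; lra.
  - apply heron_sinh_c_pos.
  - apply heron_sinh_c_sqr.
Qed.

Lemma heron_triangle_harea : harea (heron_triangle m t W) = A.
Proof.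
  unfold harea. rewrite heron_triangle_eq. cbn [tal tbe tga right_triangle]. unfold be. lra.
Qed.

Lemma heron_triangle_heron :
  is_hyp_heron (heron_triangle m t W) /\ has_right_angle (heron_triangle m t W) /\
  cos (harea (heron_triangle m t W)) = (1 - m ^ 2) / (1 + m ^ 2) /\
  sin (harea (heron_triangle m t W)) = 2 * m / (1 + m ^ 2).
Proof.
  destruct heron_angles as [HA [Hal Hbe]]. destruct tW_quartic as [t_rat [W_rat _]].
  destruct (right_triangle_cosh al be s) as [Ha [Hb Hc]];
    [lra | lra | unfold be; lra | apply heron_sinh_c_sqr |].
  pose proof (in_Qi_2atan m m_rat) as [cA_rat sA_rat]. fold A in cA_rat, sA_rat.
  pose proof (in_Qi_2atan t t_rat) as [ca_rat sa_rat]. fold al in ca_rat, sa_rat.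
  assert (in_Qi (cos be) (sin be)) as [cb_rat sb_rat].
  { replace be with (PI / 2 - (A + al)) by (unfold be; ring).
    now apply in_Qi_shift, in_Qi_plus; apply in_Qi_2atan. }
  assert (s_rat : is_rat s) by (unfold s; solve_rat).
  rewrite heron_triangle_harea. unfold A. rewrite cos_2atan, sin_2atan.
  split; [| split; [now right; right | split; reflexivity]].
  unfold is_hyp_heron. rewrite heron_triangle_harea.
  split; [apply heron_triangle_is_hyp_triangle |].
  rewrite heron_triangle_eq in *. unfold in_Qi.
  rewrite !exp_cosh_sinh, Ha, Hb, Hc. cbn [ta tb tc tal tbe tga right_triangle].
  rewrite !sinh_arcsinh, cos_PI2, sin_PI2.
  repeat split; solve_rat.
Qed.

Lemma heron_triangle_sides_lt :
  ta (heron_triangle m t W) < tb (heron_triangle m t W) < tc (heron_triangle m t W).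
Proof.
  destruct heron_angles as [HA [Hal Hbe]]. pose proof PI_RGT_0.
  rewrite heron_triangle_eq. apply right_triangle_sides_lt; try (unfold be in *; lra).
  - apply heron_sinh_c_pos.
  - apply sin_increasing_1; unfold be in *; lra.
Qed.

End HeronTriangle.

Lemma hcongruent_sorted (T U : htri) : ta T < tb T < tc T -> ta U < tb U < tc U ->
  hcongruent T U -> ta T = ta U /\ tc T = tc U.
Proof. unfold hcongruent. intros HT HU Hc. intuition lra. Qed.

Lemma heron_triangle_not_congruent (m t1 W1 t2 W2 : R) :
  0 < m -> m < 1 ->
  0 < t1 < tau_max m -> quartic_point ((1 - m ^ 2) / m) t1 W1 ->
  0 < t2 < tau_max m -> quartic_point ((1 - m ^ 2) / m) t2 W2 ->
  t1 <> t2 -> ~ hcongruent (heron_triangle m t1 W1) (heron_triangle m t2 W2).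
Proof.
  intros Hm0 Hm1 [Ht1 Ht1'] H1 [Ht2 Ht2'] H2 Ht Hc.
  destruct (hcongruent_sorted _ _ (heron_triangle_sides_lt m t1 W1 Hm0 Hm1 Ht1 Ht1' H1)
              (heron_triangle_sides_lt m t2 W2 Hm0 Hm1 Ht2 Ht2' H2) Hc) as [Ha Hc'].
  pose proof (heron_sinh_c_pos m t2 W2 Hm0 Hm1 Ht2 Ht2' H2) as Hs2.
  rewrite !heron_triangle_eq in Ha, Hc'. cbn [ta tc right_triangle] in Ha, Hc'.
  apply (f_equal sinh) in Ha, Hc'. rewrite !sinh_arcsinh in Ha, Hc'.
  rewrite Hc' in Ha. apply Rmult_eq_reg_r in Ha; [| lra].
  destruct (heron_angles m t1 Hm0 Hm1 Ht1 Ht1') as [HA [Hal1 Hbe1]].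
  destruct (heron_angles m t2 Hm0 Hm1 Ht2 Ht2') as [_ [Hal2 Hbe2]].
  apply sin_inj in Ha; [| lra | lra].
  apply Ht. rewrite <- (tan_atan t1), <- (tan_atan t2). f_equal. lra.
Qed.

Section SmallQuarticPoints.

Variable m : R.
Hypothesis m_pos : 0 < m.
Hypothesis m_lt_1 : m < 1.
Hypothesis m_rat : is_rat m.

Let k := (1 - m ^ 2) / m.
Let M := 2 * (1 + m ^ 2) / m.

Lemma curve_M_sqr : M ^ 2 = 16 + 4 * k ^ 2.
Proof. unfold M, k. field. lra. Qed.

Lemma curve_base_point : on_curve M (-4) (4 * k).
Proof. unfold on_curve. rewrite curve_M_sqr. ring. Qed.

Lemma curve_base_point_double : fst (ec_double M (-4, 4 * k)) / M = seed m.
Proof.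
  assert (0 < k) by (unfold k; apply Rdiv_lt_0_compat; nra).
  rewrite double_x by (apply curve_base_point || lra).
  unfold M, k, seed. field. repeat split; nra.
Qed.

Lemma exists_small_quartic_point (tau : R) : 0 < tau ->
  exists t W, 0 < t < tau /\ quartic_point k t W.
Proof.
  intros Htau.
  assert (Hk : 0 < k) by (unfold k; apply Rdiv_lt_0_compat; nra).
  assert (HM : 0 < M) by (unfold M; apply Rdiv_lt_0_compat; nra).
  destruct (is_rat_coprime_frac m m_rat) as [p [q [Hpq [Hq Hm]]]].
  assert (Hp : p <> 0%Z) by (intros ->; rewrite Hm in m_pos; unfold Rdiv in m_pos; lra).
  assert (Hpq2 : (p * p <> q * q)%Z).
  { intros Hc. apply (f_equal IZR) in Hc. rewrite !mult_IZR in Hc.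
    assert (IZR q <> 0) by now apply not_0_IZR.
    enough (m ^ 2 = 1) by nra.
    rewrite Hm. transitivity (IZR p * IZR p / (IZR q * IZR q)); [field; auto |].
    rewrite Hc. field. auto. }
  destruct (seed_odd_over_pow2 p q Hpq Hp Hq Hpq2) as [e0 [He0 Hseed]].
  rewrite <- Hm, <- curve_base_point_double in Hseed.
  assert (M_rat : is_rat M) by (unfold M; solve_rat).
  assert (k_rat : is_rat k) by (unfold k; solve_rat).
  destruct (exists_large_point M (-4) (4 * k) e0 HM M_rat curve_base_point ltac:(solve_rat)
              ltac:(solve_rat) ltac:(lra) He0 Hseed (16 / tau ^ 2 + 4 * k / tau))
    as [u [v [[Huv [u_rat v_rat]] [HKu Hv0]]]].
  assert (16 / tau ^ 2 > 0 /\ 4 * k / tau > 0) as []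
    by (split; apply Rdiv_lt_0_compat; try apply pow_lt; lra).
  exists (fst (quartic_of_curve k u v)), (Rabs (snd (quartic_of_curve k u v))).
  split.
  - apply (quartic_of_curve_small k M u v tau); try lra; [exact Huv | |].
    + assert (16 / tau ^ 2 * tau ^ 2 = 16) by (field; lra). pose proof (pow_lt tau 2 Htau). nra.
    + assert (4 * k / tau * tau = 4 * k) by (field; lra). nra.
  - split; [| split; [| split]].
    + cbv beta zeta delta [quartic_of_curve fst]. solve_rat.
    + cbv beta zeta delta [quartic_of_curve fst snd]. solve_rat.
    + apply Rabs_pos.
    + rewrite pow2_abs. apply (quartic_of_curve_spec k M); [apply curve_M_sqr | exact Huv | lra].
Qed.

End SmallQuarticPoints.

Lemma exists_injective_seq (P : R -> R -> Prop) (tau0 : R) : 0 < tau0 ->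
  (forall tau, 0 < tau -> exists t w, 0 < t < tau /\ P t w) ->
  exists ts ws : nat -> R, (forall n, 0 < ts n < tau0 /\ P (ts n) (ws n)) /\
    (forall i j, i <> j -> ts i <> ts j).
Proof.
  intros Htau0 Hsmall.
  assert (Hpick : forall tau, exists p : R * R, 0 < tau -> 0 < fst p < tau /\ P (fst p) (snd p)).
  { intros tau. destruct (Rlt_or_le 0 tau) as [Htau | Htau].
    - destruct (Hsmall tau Htau) as [t [w Htw]]. now exists (t, w).
    - exists (0, 0). lra. }
  destruct (choice _ Hpick) as [f Hf].
  set (seq n := Nat.iter n (fun p => f (fst p)) (f tau0)).
  assert (Hstep : forall n, seq (S n) = f (fst (seq n))) by reflexivity.
  assert (Hseq : forall n, (0 < fst (seq n) < tau0 /\ P (fst (seq n)) (snd (seq n))) /\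
                           fst (seq (S n)) < fst (seq n)).
  { induction n as [| n [[Hn Hn'] Hdec]].
    - destruct (Hf tau0 Htau0) as [H0 HP0]. split; [now split |].
      rewrite Hstep. apply (Hf (fst (f tau0))). lra.
    - destruct (Hf (fst (seq n))) as [H1 HP1]; [lra |]. rewrite <- Hstep in H1, HP1.
      split; [split; [lra | exact HP1] |].
      rewrite (Hstep (S n)). apply Hf. lra. }
  exists (fun n => fst (seq n)), (fun n => snd (seq n)). split; [apply Hseq |].
  assert (Hdec : forall i j, (i < j)%nat -> fst (seq j) < fst (seq i)).
  { intros i j Hij. induction Hij as [| j Hij IH]; [apply Hseq |].
    pose proof (proj2 (Hseq j)). lra. }
  intros i j Hij Heq. destruct (Nat.lt_total i j) as [Hlt | [Hlt | Hlt]]; [| contradiction |];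
    apply Hdec in Hlt; lra.
Qed.

Theorem mainTheorem3 (m : Q) (hm0 : (0 < m)%Q) (hm1 : (m < 1)%Q) :
  exists T : nat -> htri,
    (forall n : nat,
       is_hyp_heron (T n) /\ has_right_angle (T n) /\
       cos (harea (T n)) = (1 - Q2R m ^ 2) / (1 + Q2R m ^ 2) /\
       sin (harea (T n)) = 2 * Q2R m / (1 + Q2R m ^ 2)) /\
    (forall i j : nat, i <> j -> ~ hcongruent (T i) (T j)).
Proof.
  assert (Hm0 : 0 < Q2R m) by (rewrite <- RMicromega.Q2R_0; now apply Qlt_Rlt).
  assert (Hm1 : Q2R m < 1) by (rewrite <- RMicromega.Q2R_1; now apply Qlt_Rlt).
  pose proof (is_rat_Q2R m) as Hrat.
  destruct (exists_injective_seq (quartic_point ((1 - Q2R m ^ 2) / Q2R m)) (tau_max (Q2R m))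
              (tau_max_pos _ (conj Hm0 Hm1)) (exists_small_quartic_point _ Hm0 Hm1 Hrat))
    as [ts [ws [Hts Hinj]]].
  exists (fun n => heron_triangle (Q2R m) (ts n) (ws n)). split.
  - intros n. destruct (Hts n) as [[Ht0 Ht1] HW].
    now apply heron_triangle_heron.
  - intros i j Hij. destruct (Hts i) as [Hti HWi], (Hts j) as [Htj HWj].
    apply heron_triangle_not_congruent; auto.
Qed.
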